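(* Let $\mathcal{U}=\{1,\dots,N\}$ be a finite set of domains organized by a domain taxonomy $\mathcal{T}$ with associated domain distance matrix $\mathbf{A}$ (defined in the context). Let $(\mathbf{x},u)$ be distributed according to the data distribution $p(\mathbf{x},u)$, where each domain is equally likely, $p(u=i)=1/N$. Let $E$ be an encoder producing encodings $\mathbf{e}=E(\mathbf{x},u,\mathbf{A})$, and let $T:\mathcal{Z}\times\mathcal{Z}\to\mathbb{R}$ be any taxonomist function, with taxonomist loss $$L_t(T,E)=\mathbb{E}\big[(T(\mathbf{e}_1,\mathbf{e}_2)-\mathbf{A}_{u_1,u_2})^2\big],$$ the expectation being over two i.i.d. samples $(\mathbf{x}_1,u_1),(\mathbf{x}_2,u_2)\sim p(\mathbf{x},u)$ with $\mathbf{e}_k=E(\mathbf{x}_k,u_k,\mathbf{A})$. If the encoding is independent of the domain, $\mathbf{e}\perp u$, then $$L_t(T,E)=0 \implies \mathbf{A}_{ij}=a \text{ for all } i\neq j\in\mathcal{U}$$ for some constant $a\in\mathbb{Z}_{>0}$.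
   Context: A domain taxonomy over $\mathcal{U}=\{1,\dots,N\}$ is a rooted directed tree whose root node is $\mathcal{U}$, in which each parent node $\mathcal{U}_p\subseteq\mathcal{U}$ is split into disjoint child nodes whose union is $\mathcal{U}_p$, and each leaf node contains exactly one domain $\{u\}$. The domain distance matrix $\mathbf{A}\in\mathbb{Z}_{\ge 0}^{N\times N}$ has $\mathbf{A}_{ij}$ equal to the shortest-path distance in the taxonomy tree between the leaves $\{i\}$ and $\{j\}$. A taxonomy is called non-informative if $\mathbf{A}_{ij}=a$ for all $i\neq j$ for some constant $a\in\mathbb{Z}_{>0}$. The encoding space is denoted $\mathcal{Z}$. The assumption that each domain has the same amount of data, $p(u=i)=1/N$, is a standing assumption of the paper. *)

From HB Require Import structures.
From mathcomp Require Import all_boot all_order all_algebra.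
From mathcomp Require Import all_classical all_reals all_analysis.

Set Implicit Arguments.
Unset Strict Implicit.
Unset Printing Implicit Defensive.

Import Order.TTheory GRing.Theory Num.Theory.
Local Open Scope ring_scope.

(* A rooted directed tree on a finite node type V, given by a parent    *)
(* map (parent root = root), each node labelled by a subset of U.       *)

Section Taxonomy.
Variables (N : nat) (V : finType) (root : V) (parent : V -> V)
  (label : V -> {set 'I_N}).

Definition children (p : V) : {set V} :=
  [set c | (c != root) && (parent c == p)].

Definition is_taxonomy : Prop :=
  [/\ parent root = root,
      (forall v, exists k, iter k parent v = root),
      label root = [set: 'I_N]%SET,
      (forall p, children p != finset.set0 ->
         label p = \bigcup_(c in children p) label c /\
         (forall c1 c2, c1 \in children p -> c2 \in children p ->
            c1 != c2 -> [disjoint label c1 & label c2])) &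
      (forall v, children v = finset.set0 -> exists u, label v = [set u]%SET)].

Definition tree_adj : rel V :=
  fun v w => ((v != root) && (parent v == w)) || ((w != root) && (parent w == v)).

Definition walk_len (v w : V) (n : nat) : Prop :=
  exists s : seq V, [/\ path tree_adj v s, last v s = w & size s = n].

Definition leaf_of (v : V) (i : 'I_N) : Prop :=
  children v = finset.set0 /\ label v = [set i]%SET.

Definition is_domain_distance_matrix (A : 'I_N -> 'I_N -> nat) : Prop :=
  forall i j v w, leaf_of v i -> leaf_of w j ->
    walk_len v w (A i j) /\ (forall n, walk_len v w n -> (A i j <= n)%N).

End Taxonomy.

(* Data distribution p(x,u) on X * 'I_N with p(u = i) = 1/N:            *)
(* p = sum_i (1/N) (P i (x) delta_i), where P i = p(x | u = i).          *)

Section Data.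
Local Open Scope classical_set_scope.
Local Open Scope ereal_scope.
Variables (d : measure_display) (X : measurableType d) (R : realType) (N : nat)
  (P : 'I_N -> probability X R).

Definition data_prob (S : set (X * 'I_N)) : \bar R :=
  \sum_(i < N) ((N%:R)^-1)%:E * P i [set x | S (x, i)].

Definition enc_indep_domain (dZ : measure_display) (Z : measurableType dZ)
  (E : X -> 'I_N -> Z) : Prop :=
  forall (B : set Z) (i : 'I_N), measurable B ->
    data_prob [set xu | B (E xu.1 xu.2) /\ xu.2 = i]
    = data_prob [set xu | B (E xu.1 xu.2)] * data_prob [set xu | xu.2 = i].

Definition taxonomist_loss (dZ : measure_display) (Z : measurableType dZ)
  (E : X -> 'I_N -> Z) (T : Z -> Z -> R) (A : 'I_N -> 'I_N -> nat) : \bar R :=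
  \sum_(i < N) \sum_(j < N)
    ((N%:R)^-1 * (N%:R)^-1)%:E *
    \int[(P i \x P j)%E]_(z in [set: X * X])
        (((T (E z.1 i) (E z.2 j) - (A i j)%:R) ^+ 2)%R)%:E.

End Data.

From HB Require Import structures.
From mathcomp Require Import all_boot all_order all_algebra.
From mathcomp Require Import all_classical all_reals all_analysis.
From mathcomp Require Import measurable_realfun zify.
Set Implicit Arguments.
Unset Strict Implicit.
Unset Printing Implicit Defensive.

Import Order.TTheory GRing.Theory Num.Theory.
Local Open Scope classical_set_scope.
Local Open Scope ring_scope.

(* Since the encoding is independent of the domain, the encoder has the same
   law under every [P i], so the encoded pair [(e1, e2)] has the same law under
   [P i \x P j] for all domains [i], [j].  Zero loss forces [T (e1, e2) = A i j]
   almost surely under [P i \x P j]; transporting this null event to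
   [P k \x P l] gives [T (e1, e2) = A i j] and [T (e1, e2) = A k l] almost
   surely there, whence [A i j = A k l].  Distinct domains lie in distinct
   leaves, so the common value is positive.  As the loss also weighs pairs with
   [u1 = u2] and [A i i = 0], the hypotheses are in fact inconsistent when
   [N >= 2]; the proof does not use this. *)

Section tree_depth.
Variables (V : finType) (root : V) (parent : V -> V).
Hypothesis reach_root : forall v, exists k, iter k parent v = root.

Let reach_rootb v : exists k, iter k parent v == root.
Proof. by have [k /eqP] := reach_root v; exists k. Qed.

Definition depth (v : V) : nat := ex_minn (reach_rootb v).

Lemma depth_parent_lt (c : V) : c != root -> (depth (parent c) < depth c)%N.
Proof.
move=> c_neq_root; rewrite /depth.
case: ex_minnP => m _ m_min; case: ex_minnP => -[|k] iter_k _.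
  by move: iter_k c_neq_root => /= ->.
by rewrite iterSr in iter_k; exact: m_min.
Qed.

End tree_depth.

Section taxonomy.
Variables (N : nat) (V : finType) (root : V) (parent : V -> V)
  (label : V -> {set 'I_N}).
Hypothesis tax : is_taxonomy root parent label.

(* A deepest node whose label contains [i] cannot be split, so it is a leaf. *)
Lemma taxonomy_leaf_of (i : 'I_N) : exists v, leaf_of root parent label v i.
Proof.
case: tax => _ reach label_root split leaf.
have i_root : i \in label root by rewrite label_root inE.
case: (@arg_maxnP _ root (fun v => i \in label v) (depth reach) i_root)
  => v i_v v_deepest.
exists v.
have [no_child|has_child] := eqVneq (children root parent v) finset.set0.
  have [u label_v] := leaf _ no_child.
  by split=> //; move: i_v; rewrite label_v inE => /eqP ->.
have [label_v _] := split _ has_child.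
move: i_v; rewrite label_v => /bigcupP[c c_child i_c].
move: c_child; rewrite inE => /andP[c_neq_root /eqP parent_c].
have /= := v_deepest c i_c; rewrite -parent_c leqNgt.
by rewrite (depth_parent_lt reach c_neq_root).
Qed.

Lemma domain_distance_gt0 (A : 'I_N -> 'I_N -> nat) (i j : 'I_N) :
  is_domain_distance_matrix root parent label A -> i != j -> (0 < A i j)%N.
Proof.
move=> distA; apply: contraNT; rewrite -eqn0Ngt => /eqP A_ij0.
have [v leaf_v] := taxonomy_leaf_of i; have [w leaf_w] := taxonomy_leaf_of j.
have [[s [_ last_s]]] := distA i j v w leaf_v leaf_w.
rewrite A_ij0 => /size0nil s_nil _; move: last_s; rewrite s_nil /= => v_w.
move: leaf_v.2; rewrite v_w leaf_w.2 => /setP/(_ i).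
by rewrite !inE eqxx eq_sym.
Qed.

End taxonomy.

Section encoder_law.
Local Open Scope ereal_scope.
Variables (R : realType) (d : measure_display) (X : measurableType d)
  (dZ : measure_display) (Z : measurableType dZ) (N : nat)
  (P : 'I_N -> probability X R) (E : X -> 'I_N -> Z).

Lemma data_prob_domain (S : set (X * 'I_N)) (i : 'I_N) :
  data_prob P [set xu | S xu /\ xu.2 = i]
  = (N%:R^-1)%:E * P i [set x | S (x, i)].
Proof.
rewrite /data_prob (bigD1 i) //= big1 ?adde0; last first.
  move=> k k_neq_i; rewrite (_ : [set x | _] = set0) ?measure0 ?mule0 //.
  by apply/seteqP; split=> x //= [_ k_i]; rewrite k_i eqxx in k_neq_i.
by congr (_ * P i _); apply/seteqP; split=> x /= => [[]|].
Qed.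

Lemma data_prob_domain_marginal (i : 'I_N) :
  data_prob P [set xu | xu.2 = i] = (N%:R^-1)%:E.
Proof.
have -> : [set xu : X * 'I_N | xu.2 = i] = [set xu | setT xu /\ xu.2 = i].
  by apply/seteqP; split=> xu /= => [|[]].
by rewrite data_prob_domain (_ : [set x | _] = setT) ?probability_setT ?mule1.
Qed.

Lemma enc_indep_domain_law (B : set Z) (i : 'I_N) :
  enc_indep_domain P E -> measurable B ->
  P i [set x | B (E x i)] = data_prob P [set xu | B (E xu.1 xu.2)].
Proof.
move=> indep mB; have N_neq0 : (N%:R : R) != 0%R.
  by rewrite pnatr_eq0 -lt0n (leq_ltn_trans _ (ltn_ord i)).
have := indep B i mB; rewrite data_prob_domain data_prob_domain_marginal.
rewrite [X in _ = X]muleC => /eqP.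
by rewrite eqe_pdivrMl // muleA -EFinM mulfV // mul1e => /eqP.
Qed.

Lemma enc_law_domain_eq (B : set Z) (i k : 'I_N) :
  enc_indep_domain P E -> measurable B ->
  P i [set x | B (E x i)] = P k [set x | B (E x k)].
Proof. by move=> indep mB; rewrite !enc_indep_domain_law. Qed.

End encoder_law.

Section encoded_pair_law.
Local Open Scope ereal_scope.
Variables (R : realType) (d : measure_display) (X : measurableType d)
  (dZ : measure_display) (Z : measurableType dZ) (N : nat)
  (P : 'I_N -> probability X R) (E : X -> 'I_N -> Z).
Hypothesis mE : forall i, measurable_fun [set: X] (E ^~ i).
Hypothesis indep : enc_indep_domain P E.

Definition enc_pair (i j : 'I_N) (z : X * X) : Z * Z := (E z.1 i, E z.2 j).

Lemma measurable_enc_pair (i j : 'I_N) :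
  measurable_fun [set: X * X] (enc_pair i j).
Proof.
apply: measurable_fun_pair.
  exact: measurableT_comp (mE i) measurable_fst.
exact: measurableT_comp (mE j) measurable_snd.
Qed.

Lemma measurable_enc_pair_preimage (i j : 'I_N) (D : set (Z * Z)) :
  measurable D -> measurable (enc_pair i j @^-1` D).
Proof. by move=> mD; rewrite -[_ @^-1` _]setTI; exact: measurable_enc_pair. Qed.

(* Both sections of [enc_pair i j @^-1` D] are encoder preimages of measurable
   sections of [D], whose probabilities do not depend on the domain. *)
Lemma enc_pair_law_domain_eq (D : set (Z * Z)) (i j k l : 'I_N) :
  measurable D ->
  (P i \x P j) (enc_pair i j @^-1` D) = (P k \x P l) (enc_pair k l @^-1` D).
Proof.
move=> mD.
have xsection_enc_pair a b x : xsection (enc_pair a b @^-1` D) x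
                              = [set y | xsection D (E x a) (E y b)].
  by apply/seteqP; split=> y; rewrite /xsection /= !in_setE.
have ysection_enc_pair a b y : ysection (enc_pair a b @^-1` D) y
                              = [set x | ysection D (E y b) (E x a)].
  by apply/seteqP; split=> x; rewrite /ysection /= !in_setE.
have change_snd a b b' :
    (P a \x P b) (enc_pair a b @^-1` D) = (P a \x P b') (enc_pair a b' @^-1` D).
  apply: eq_integral => x _ /=; rewrite !xsection_enc_pair.
  exact: enc_law_domain_eq _ _ indep (measurable_xsection (E x a) mD).
have change_fst a a' b :
    (P a \x P b) (enc_pair a b @^-1` D) = (P a' \x P b) (enc_pair a' b @^-1` D).
  have swap c : (P c \x P b) (enc_pair c b @^-1` D)
                = \int[P b]_y P c (ysection (enc_pair c b @^-1` D) y).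
    rewrite (product_measure_unique (m' := P c \x^ P b)) //.
      by move=> A B mA mB; exact: product_measure2E.
    exact: measurable_enc_pair_preimage.
  rewrite !swap; apply: eq_integral => y _ /=; rewrite !ysection_enc_pair.
  exact: enc_law_domain_eq _ _ indep (measurable_ysection (E y b) mD).
by rewrite (change_fst i k) (change_snd k j l).
Qed.

End encoded_pair_law.

Section null_deviation.
Local Open Scope ereal_scope.
Variables (d : measure_display) (T : measurableType d) (R : realType).

Lemma measurable_neq_cst (f : T -> R) (c : R) :
  measurable_fun [set: T] f -> measurable [set x | f x != c].
Proof.
move=> mf; rewrite -[X in measurable X]setTI.
rewrite (_ : [set x | _] = f @^-1` ~` [set c]); last first.
  by apply/seteqP; split=> x /= /eqP.
exact: mf (measurableC (measurable_set1 c)).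
Qed.

Lemma integral_sqrB_eq0 (mu : {measure set T -> \bar R}) (f : T -> R) (c : R) :
  measurable_fun [set: T] f ->
  \int[mu]_(x in [set: T]) (((f x - c) ^+ 2)%R)%:E = 0 ->
  mu [set x | f x != c] = 0.
Proof.
move=> mf int_eq0.
have mdev : measurable_fun [set: T] (fun x => (((f x - c) ^+ 2)%R)%:E).
  by apply/measurable_EFinP/measurable_funX/measurable_funB.
have /(ae_eq_integral_abs mu measurableT mdev).1 [M [mM muM0 dev_neq0_M]] :
    \int[mu]_(x in [set: T]) `|(((f x - c) ^+ 2)%R)%:E| = 0.
  rewrite -int_eq0; apply: eq_integral => x _.
  by rewrite gee0_abs // lee_fin sqr_ge0.
apply/eqP; rewrite -measure_le0 -muM0; apply: le_measure; rewrite ?inE //.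
  exact: measurable_neq_cst.
move=> x /= fx_neq_c; apply: dev_neq0_M => /(_ I) /eqP.
by rewrite eqe sqrf_eq0 subr_eq0 (negbTE fx_neq_c).
Qed.

Lemma probability_null_neq_uniq (mu : probability T R) (f : T -> R) (a b : R) :
  measurable_fun [set: T] f ->
  mu [set x | f x != a] = 0 -> mu [set x | f x != b] = 0 -> a = b.
Proof.
move=> mf null_a null_b; apply/eqP/negPn/negP => a_neq_b.
have : mu setT <= mu [set x | f x != a] + mu [set x | f x != b].
  have [ma mb] := (measurable_neq_cst a mf, measurable_neq_cst b mf).
  apply: le_trans (measureU2 _ ma mb).
  apply: le_measure; rewrite ?inE //; first exact: measurableU.
  move=> x _ /=; have [fx_a|] := eqVneq (f x) a; last by left.
  by right; rewrite fx_a.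
by rewrite probability_setT null_a null_b adde0 lee_fin ler10.
Qed.

End null_deviation.

Section taxonomist.
Local Open Scope ereal_scope.
Variables (R : realType) (d : measure_display) (X : measurableType d)
  (dZ : measure_display) (Z : measurableType dZ) (N : nat)
  (P : 'I_N -> probability X R) (E : X -> 'I_N -> Z) (T : Z -> Z -> R)
  (A : 'I_N -> 'I_N -> nat).
Hypothesis mE : forall i, measurable_fun [set: X] (E ^~ i).
Hypothesis mT : measurable_fun [set: Z * Z] (fun z : Z * Z => T z.1 z.2).
Hypothesis indep : enc_indep_domain P E.
Hypothesis loss0 : taxonomist_loss P E T A = 0.

Lemma measurable_taxonomist_enc_pair (i j : 'I_N) :
  measurable_fun [set: X * X] (fun z : X * X => T (E z.1 i) (E z.2 j)).
Proof. exact: measurableT_comp mT (measurable_enc_pair mE i j). Qed.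

Lemma taxonomist_loss_eq0_integral (i j : 'I_N) :
  \int[P i \x P j]_(z in [set: X * X])
    (((T (E z.1 i) (E z.2 j) - (A i j)%:R) ^+ 2)%R)%:E = 0.
Proof.
have N_neq0 : (N%:R : R) != 0%R.
  by rewrite pnatr_eq0 -lt0n (leq_ltn_trans _ (ltn_ord i)).
have term_ge0 a b : 0 <= ((N%:R^-1 * N%:R^-1)%R)%:E *
    \int[P a \x P b]_(z in [set: X * X])
      (((T (E z.1 a) (E z.2 b) - (A a b)%:R) ^+ 2)%R)%:E.
  rewrite mule_ge0 ?lee_fin ?mulr_ge0 ?invr_ge0 ?ler0n //.
  by apply: integral_ge0 => z _; rewrite lee_fin sqr_ge0.
move/eqP: loss0; rewrite seq_psume_eq0 => [|a _]; last exact: sume_ge0.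
move=> /allP /(_ i (mem_index_enum _)) /=.
rewrite seq_psume_eq0 // => /allP /(_ j (mem_index_enum _)) /=.
by rewrite mule_eq0 eqe mulf_eq0 invr_eq0 orbb (negbTE N_neq0) => /eqP.
Qed.

Lemma taxonomist_loss_eq0_null (i j k l : 'I_N) :
  (P k \x P l) [set z | T (E z.1 k) (E z.2 l) != (A i j)%:R] = 0.
Proof.
pose D := [set z : Z * Z | T z.1 z.2 != (A i j)%:R].
have mD : measurable D by exact: measurable_neq_cst.
change ((P k \x P l) (enc_pair E k l @^-1` D) = 0).
rewrite -(enc_pair_law_domain_eq mE indep i j) //.
exact: integral_sqrB_eq0 (measurable_taxonomist_enc_pair i j)
  (taxonomist_loss_eq0_integral i j).
Qed.

Lemma taxonomist_loss_eq0_cst (i j k l : 'I_N) : A i j = A k l.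
Proof.
apply/eqP; rewrite -(eqr_nat R); apply/eqP.
apply: (probability_null_neq_uniq (measurable_taxonomist_enc_pair k l)).
  exact: (taxonomist_loss_eq0_null i j).
exact: taxonomist_loss_eq0_null.
Qed.

End taxonomist.

Theorem theorem4p1 (N : nat) (V : finType) (root : V) (parent : V -> V)
  (label : V -> {set 'I_N}) (A : 'I_N -> 'I_N -> nat)
  (R : realType) (d : measure_display) (X : measurableType d)
  (dZ : measure_display) (Z : measurableType dZ)
  (P : 'I_N -> probability X R)
  (E : X -> 'I_N -> Z) (T : Z -> Z -> R) :
  is_taxonomy root parent label ->
  is_domain_distance_matrix root parent label A ->
  (forall i, measurable_fun [set: X] (E ^~ i)) ->
  measurable_fun [set: Z * Z] (fun z : Z * Z => T z.1 z.2) ->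
  enc_indep_domain P E ->
  taxonomist_loss P E T A = 0%E ->
  exists a : nat, (0 < a)%N /\ (forall i j : 'I_N, i != j -> A i j = a).
Proof.
move=> tax distA mE mT indep loss0.
have [N_le1|N_gt1] := leqP N 1.
  exists 1%N; split=> // i j /eqP[]; apply: ord_inj.
  by have := ltn_ord i; have := ltn_ord j; lia.
pose i0 : 'I_N := Ordinal (ltnW N_gt1); pose j0 : 'I_N := Ordinal N_gt1.
exists (A i0 j0); split.
  by have := domain_distance_gt0 tax distA (isT : i0 != j0).
by move=> i j _; exact: taxonomist_loss_eq0_cst mE mT indep loss0 _ _ _ _.
Qed.
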